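(* Let $V$ be a finite totally ordered set and let $w$ be a derangement of $V$. Then the number $f(w)$ of simple graphs $G$ with vertex set $V$ such that $w \in \mathcal{D}(G)$ is $$f(w) = 2^{\binom{|V|}{2} - \sum_{t \in U(w)} |\rho_w(t)|} \cdot \prod_{t \in U(w)} \left(2^{|\rho_w(t)|} - 1\right) = 2^{\binom{|V|}{2}} \cdot \prod_{t \in U(w)} \left(1 - \frac{1}{2^{|\rho_w(t)|}}\right),$$ and consequently $r(w) = f(w)/2^{\binom{|V|}{2}} = \prod_{t \in U(w)} \left(1 - 2^{-|\rho_w(t)|}\right)$.
   Context: A derangement of $V$ is a fixed-point-free permutation of $V$. For a permutation $w$ of $V$ and $t \in V$, define $\rho_w(t) = \{t, w(t), \ldots, w^{k-1}(t)\}$, where $k$ is the smallest positive integer with $w^k(t) \le t$, and define $\lambda_w(t) = w^{-\ell}(t)$, where $\ell$ is the smallest positive integer with $w^{-\ell}(t) \le t$. For a simple graph $G$ with (totally ordered) vertex set $V$, the derangement set $\mathcal{D}(G)$ is the set of permutations $w$ of $V$ such that for every vertex $t$, the vertex $\lambda_w(t)$ is adjacent in $G$ to some vertex of $\rho_w(t)$. The frequency $f(w)$ is the number of simple graphs $G$ on vertex set $V$ with $w \in \mathcal{D}(G)$, and the rate is $r(w) = f(w)/2^{\binom{|V|}{2}}$. $U(w)$ denotes the set of elements of $V$ that are not the minimal element of their $w$-cycle. *)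

From HB Require Import structures.
From mathcomp Require Import all_boot all_order fingroup perm all_algebra.
Set Implicit Arguments. Unset Strict Implicit. Unset Printing Implicit Defensive.
Import Order.TTheory GRing.Theory Num.Theory.

Local Open Scope order_scope.

Section Derange.
Variables (d : Order.disp_t) (T : finOrderType d).

Definition derangement (w : {perm T}) : Prop := forall x : T, w x != x.

Lemma ex_return (w : {perm T}) (t : T) :
  exists k : nat, (0 < k)%N && ((w ^+ k)%g t <= t).
Proof.
exists #[w]%g; rewrite order_gt0 /= expg_order perm1; exact: lexx.
Qed.

Definition rho_len (w : {perm T}) (t : T) : nat := ex_minn (ex_return w t).

Definition rho (w : {perm T}) (t : T) : {set T} :=
  [set (w ^+ i)%g t | i : 'I_(rho_len w t)].

Definition lambda (w : {perm T}) (t : T) : T :=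
  ((w^-1)%g ^+ rho_len (w^-1)%g t)%g t.

Definition simple_graph (E : {set {set T}}) : bool :=
  [forall e in E, #|e| == 2%N].

Definition adj (E : {set {set T}}) (x y : T) : bool :=
  (x != y) && ([set x; y] \in E).

Definition inD (E : {set {set T}}) (w : {perm T}) : bool :=
  [forall t : T, [exists x in rho w t, adj E (lambda w t) x]].

Definition freq (w : {perm T}) : nat :=
  #|[set E : {set {set T}} | simple_graph E && inD E w]|.

Definition rate (w : {perm T}) : rat :=
  ((freq w)%:R / (2 ^ 'C(#|T|, 2))%:R)%R.

Definition Uset (w : {perm T}) : {set T} :=
  [set t | ~~ [forall x in porbit w t, t <= x]].

End Derange.

(* For t in U(w), every x in rho_w(t) satisfies lambda_w(t) < t <= x, so the
   pairs {lambda_w(t), x} with x in rho_w(t) form a set L(t) of |rho_w(t)| edges,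
   and the condition at t says exactly that G meets L(t).  For a minimum t of its
   cycle the condition is implied by the one at w(t), because
   lambda_w(w(t)) = t and rho_w(w(t)) is contained in rho_w(t).
   The sets L(t), t in U(w), are pairwise disjoint: a common edge gives
   lambda_w(t1) = lambda_w(t2) and a common point b of rho_w(t1) and rho_w(t2).
   Walking backwards from b, the i-th walk passes through t_i and stays >= t_i
   until it reaches lambda_w(t_i) < t_i; so both walks reach the common lambda
   after the same number of steps, each t_i lies on the other walk, and t1 = t2.
   So f(w) counts the edge sets meeting each of the disjoint blocks L(t): the
   edges outside the blocks are free and each block contributes
   2^|L(t)| - 1 nonempty traces. *)

From HB Require Import structures.
From mathcomp Require Import all_boot all_order fingroup perm all_algebra.
Set Implicit Arguments. Unset Strict Implicit. Unset Printing Implicit Defensive.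
Import Order.TTheory GRing.Theory Num.Theory.

Section HittingSets.
Variables (J X : finType) (S : J -> {set X}).

Definition hitting_subsets (I : {set J}) (P : {set X}) : {set {set X}} :=
  [set E : {set X} | (E \subset P) && [forall i in I, E :&: S i != set0]].

Lemma hitting_subsets0 (P : {set X}) : hitting_subsets set0 P = powerset P.
Proof.
apply/setP => E; rewrite !inE; case: (E \subset P) => //=.
by apply/forall_inP => i; rewrite inE.
Qed.

Lemma setU_in_disjoint_inj (A0 B0 : {set X}) : [disjoint A0 & B0] ->
  {in setX (powerset A0) (powerset B0) &,
    injective (fun p : {set X} * {set X} => p.1 :|: p.2)}.
Proof.
have proj (A1 B1 C D : {set X}) : [disjoint A1 & B1] ->
    C \subset A1 -> D \subset B1 -> (C :|: D) :&: A1 = C.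
  move=> dAB sC sD; rewrite setIUl (setIidPl sC).
  by rewrite (disjoint_setI0 (disjointWl sD _)) ?setU0 // disjoint_sym.
move=> dAB [A B] [A' B']; rewrite !inE /= => /andP[sA sB] /andP[sA' sB'] eU.
have dBA : [disjoint B0 & A0] by rewrite disjoint_sym.
congr pair.
  by rewrite -(proj _ _ _ _ dAB sA sB) eU (proj _ _ _ _ dAB sA' sB').
by rewrite -(proj _ _ _ _ dBA sB sA) setUC eU setUC (proj _ _ _ _ dBA sB' sA').
Qed.

Lemma hitting_subsetsD1 (I : {set J}) (P : {set X}) i0 :
    i0 \in I -> S i0 \subset P ->
    {in I, forall i, i != i0 -> [disjoint S i & S i0]} ->
  hitting_subsets I P =
    (fun p : {set X} * {set X} => p.1 :|: p.2) @:
      setX (powerset (S i0) :\ set0) (hitting_subsets (I :\ i0) (P :\: S i0)).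
Proof.
move=> i0I sS0P dS; apply/setP => E; apply/idP/imsetP.
  rewrite inE => /andP[sEP /forall_inP hitE].
  exists (E :&: S i0, E :\: S i0); last by rewrite /= setID.
  rewrite !inE /= subsetIr hitE //= setSD //=.
  apply/forall_inP => i; rewrite !inE => /andP[ii0 iI].
  apply: contraNneq (hitE i iI) => hitD.
  by rewrite -hitD setIDAC (setDidPl (disjointWl (subsetIr _ _) (dS i iI ii0))).
move=> [[A B]]; rewrite !inE /= => /andP[/andP[A0 sA] /andP[sB /forall_inP hitB]] ->.
rewrite subUset (subset_trans sA sS0P) (subset_trans sB (subsetDl _ _)) /=.
apply/forall_inP => i iI; rewrite setIUl setU_eq0 negb_and.
have [->|ii0] := eqVneq i i0; first by rewrite (setIidPl sA) A0.
by rewrite hitB ?orbT // !inE ii0.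
Qed.

Lemma card_hitting_subsets (I : {set J}) (P : {set X}) :
    {in I, forall i, S i \subset P} ->
    {in I &, forall i j, i != j -> [disjoint S i & S j]} ->
  #|hitting_subsets I P| =
    2 ^ (#|P| - \sum_(i in I) #|S i|) * \prod_(i in I) (2 ^ #|S i| - 1).
Proof.
move cI: #|I| => n; elim: n I P cI => [|n IH] I P cI sSP dS.
  by rewrite (cards0_eq cI) hitting_subsets0 card_powerset !big_set0 subn0 muln1.
have [i0 i0I] : {i0 | i0 \in I} by apply/sigW/set0Pn; rewrite -cards_eq0 cI.
have dS0 : {in I, forall i, i != i0 -> [disjoint S i & S i0]}.
  by move=> i iI; apply: dS.
rewrite (hitting_subsetsD1 i0I (sSP _ i0I) dS0) card_in_imset; last first.
  have dS0P : [disjoint S i0 & P :\: S i0].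
    by rewrite disjoint_sym; apply/setDidPl; rewrite setDDl setUid.
  apply: sub_in2 (setU_in_disjoint_inj dS0P).
  by move=> [A B]; rewrite !inE /= => /andP[/andP[_ ->] /andP[-> _]].
rewrite cardsX IH; first last.
- by move=> i j; rewrite !inE => /andP[_ iI] /andP[_ jI]; apply: dS.
- by move=> i; rewrite !inE subsetD => /andP[ii0 iI]; rewrite sSP // dS0.
- by move: (cardsD1 i0 I); rewrite i0I cI add1n => -[].
have cQ : #|powerset (S i0) :\ set0| = 2 ^ #|S i0| - 1.
  have := cardsD1 set0 (powerset (S i0)).
  by rewrite card_powerset inE sub0set add1n => ->; rewrite subn1.
rewrite cQ cardsD (setIidPr (sSP _ i0I)) (big_setD1 i0 i0I) (big_setD1 i0 i0I) /=.
by rewrite subnDA mulnCA.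
Qed.

Lemma card_bigcup_disjoint (I : {set J}) :
    {in I &, forall i j, i != j -> [disjoint S i & S j]} ->
  #|\bigcup_(i in I) S i| = \sum_(i in I) #|S i|.
Proof.
move=> dS; pose F i := if i \in I then S i else set0.
have dF i j : i != j -> [disjoint F i & F j].
  rewrite /F -setI_eq0; case: ifP => iI; case: ifP => jI; rewrite ?set0I ?setI0 //.
  by rewrite setI_eq0; apply: dS.
rewrite big_mkcond -sum1_card (partition_disjoint_bigcup _ _ dF) [RHS]big_mkcond.
apply: eq_bigr => i _; rewrite sum1_card /F; case: ifP => _ //.
by rewrite cards0.
Qed.

Lemma sum_card_disjoint_le (I : {set J}) (P : {set X}) :
    {in I, forall i, S i \subset P} ->
    {in I &, forall i j, i != j -> [disjoint S i & S j]} ->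
  \sum_(i in I) #|S i| <= #|P|.
Proof.
by move=> sSP dS; rewrite -card_bigcup_disjoint // subset_leq_card //; apply/bigcupsP.
Qed.

End HittingSets.

Lemma natr_exp2_subn_prod (R : numFieldType) (J : finType) (I : {set J})
    (n : J -> nat) N :
    \sum_(i in I) n i <= N ->
  ((2 ^ (N - \sum_(i in I) n i) * \prod_(i in I) (2 ^ n i - 1))%:R =
    (2 ^ N)%:R * \prod_(i in I) (1 - 1 / (2 ^ n i)%:R) :> R)%R.
Proof.
move=> le_sum.
have exp2_neq0 k : ((2 ^ k)%:R != 0 :> R)%R by rewrite pnatr_eq0 expn_eq0.
have split_factor i : (1 - 1 / (2 ^ n i)%:R = (2 ^ n i - 1)%:R / (2 ^ n i)%:R :> R)%R.
  by rewrite natrB ?expn_gt0 // mulrBl divff.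
rewrite (eq_bigr _ (fun i _ => split_factor i)) prodf_div -!natr_prod -expn_sum.
rewrite -{2}(subnK le_sum) expnD !natrM -mulrA; congr (_ * _)%R.
by rewrite mulrCA divff ?mulr1.
Qed.

Section FirstReturn.
Variables (d : Order.disp_t) (T : finOrderType d).
Implicit Types (s : {perm T}) (t x : T).

Lemma rho_len_gt0 s t : 0 < rho_len s t.
Proof. by rewrite /rho_len; case: ex_minnP => k /andP[]. Qed.

Lemma rho_len_le s t : ((s ^+ rho_len s t)%g t <= t)%O.
Proof. by rewrite /rho_len; case: ex_minnP => k /andP[]. Qed.

Lemma rho_len_min s t i : 0 < i -> ((s ^+ i)%g t <= t)%O -> rho_len s t <= i.
Proof.
by move=> i_gt0 le_it; rewrite /rho_len; case: ex_minnP => k _; apply; rewrite i_gt0.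
Qed.

Lemma lt_before_rho_len s t i : 0 < i < rho_len s t -> (t < (s ^+ i)%g t)%O.
Proof.
case/andP=> i_gt0 lt_ik; rewrite ltNge; apply: contraTN lt_ik => le_it.
by rewrite -leqNgt rho_len_min.
Qed.

Lemma le_before_rho_len s t i : i < rho_len s t -> (t <= (s ^+ i)%g t)%O.
Proof.
case: (posnP i) => [-> _|i_gt0 lt_ik]; first by rewrite expg0 perm1.
by rewrite ltW // lt_before_rho_len ?i_gt0.
Qed.

Lemma mem_rhoP s t x :
  reflect (exists2 i, i < rho_len s t & x = (s ^+ i)%g t) (x \in rho s t).
Proof.
apply: (iffP imsetP) => [[i _ ->]|[i lt_ik ->]]; first by exists i.
by exists (Ordinal lt_ik).
Qed.

Lemma rho_ge s t x : x \in rho s t -> (t <= x)%O.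
Proof. by case/mem_rhoP => i lt_ik ->; apply: le_before_rho_len. Qed.

Lemma permX_modn s x l j : (s ^+ l)%g x = x -> (s ^+ j)%g x = (s ^+ (j %% l))%g x.
Proof.
move=> fix_x; rewrite {1}(divn_eq j l) expgD permM mulnC expgM.
congr ((s ^+ _)%g _); elim: (j %/ l) => [|q IH]; first by rewrite expg0 perm1.
by rewrite expgS permM fix_x.
Qed.

Lemma porbit_ge_of_return s t : (s ^+ rho_len s t)%g t = t ->
  {in porbit s t, forall y, (t <= y)%O}.
Proof.
move=> ret y /porbitP[j ->]; rewrite (permX_modn _ ret).
by apply: le_before_rho_len; rewrite ltn_mod rho_len_gt0.
Qed.

Lemma permVX_le s x i j :
  i <= j -> ((s^-1) ^+ i)%g ((s ^+ j)%g x) = (s ^+ (j - i))%g x.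
Proof. by move=> le_ij; rewrite -{1}(subnK le_ij) expgD permM expVgn permK. Qed.

Lemma permVX_ge s x i j :
  j <= i -> ((s^-1) ^+ i)%g ((s ^+ j)%g x) = ((s^-1) ^+ (i - j))%g x.
Proof.
by move=> le_ji; rewrite -{1}(subnK le_ji) addnC expgD permM (expVgn s j) permK.
Qed.

End FirstReturn.

Section CycleMinima.
Variables (d : Order.disp_t) (T : finOrderType d) (w : {perm T}).
Implicit Types (t b : T).

Lemma UsetPn t : reflect {in porbit w t, forall y, (t <= y)%O} (t \notin Uset w).
Proof. by rewrite inE negbK; apply: forall_inP. Qed.

Lemma lambda_lt t : t \in Uset w -> (lambda w t < t)%O.
Proof.
move=> tU; rewrite /lambda lt_neqAle rho_len_le andbT.
apply: contraTneq tU => ret; apply/UsetPn => y; rewrite -porbitV.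
exact: porbit_ge_of_return.
Qed.

Lemma lambda_id t : t \notin Uset w -> lambda w t = t.
Proof.
move/UsetPn=> tmin; apply/le_anti.
by rewrite rho_len_le tmin // -(porbitV w) mem_porbit.
Qed.

Lemma rho_backward_walk t b : t \in Uset w -> b \in rho w t ->
  exists m, [/\ ((w^-1) ^+ m)%g b = lambda w t,
                forall i, i < m -> (t <= ((w^-1) ^+ i)%g b)%O &
                exists2 i, i < m & ((w^-1) ^+ i)%g b = t].
Proof.
move=> tU /mem_rhoP[q lt_qk ->]; exists (q + rho_len (w^-1)%g t); split.
- by rewrite permVX_ge ?leq_addr // addKn.
- move=> i lt_im; have [le_iq|lt_qi] := leqP i q.
    by rewrite permVX_le // le_before_rho_len // (leq_ltn_trans (leq_subr _ _)).
  by rewrite permVX_ge ?(ltnW lt_qi) // le_before_rho_len // ltn_subLR ?(ltnW lt_qi).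
- exists q; first by rewrite -{1}(addn0 q) ltn_add2l rho_len_gt0.
  by rewrite permVX_le // subnn expg0 perm1.
Qed.

Lemma Uset_lambda_rho_inj t1 t2 b : t1 \in Uset w -> t2 \in Uset w ->
  b \in rho w t1 -> b \in rho w t2 -> lambda w t1 = lambda w t2 -> t1 = t2.
Proof.
move=> t1U t2U b1 b2 eq_lambda.
have [m1 [ret1 ge1 [i1 lt_i1 walk1]]] := rho_backward_walk t1U b1.
have [m2 [ret2 ge2 [i2 lt_i2 walk2]]] := rho_backward_walk t2U b2.
have eq_m : m1 = m2.
  have [lt_m|lt_m|//] := ltngtP m1 m2.
    by have := ge2 _ lt_m; rewrite ret1 eq_lambda leNgt lambda_lt.
  by have := ge1 _ lt_m; rewrite ret2 -eq_lambda leNgt lambda_lt.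
apply/le_anti/andP; split.
  by rewrite -walk2; apply: ge1; rewrite eq_m.
by rewrite -walk1; apply: ge2; rewrite -eq_m.
Qed.

Lemma rho_succ_cycle_min t : t \notin Uset w -> rho w (w t) \subset rho w t.
Proof.
move=> tU; have ret : (w ^+ rho_len w t)%g t = t.
  by apply/le_anti; rewrite rho_len_le; move/UsetPn: tU; apply; rewrite mem_porbit.
apply/subsetP => _ /mem_rhoP[i _ ->]; rewrite -permM -expgS (permX_modn _ ret).
by apply/mem_rhoP; exists (i.+1 %% rho_len w t); rewrite ?ltn_mod ?rho_len_gt0.
Qed.

(* A fixed point t would have lambda_w(t) = t and rho_w(t) = {t}, so no graph
   could satisfy the condition at t. *)
Hypothesis der : derangement w.

Lemma cycle_min_lt_succ t : t \notin Uset w -> (t < w t)%O.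
Proof.
move/UsetPn=> tmin; rewrite lt_neqAle eq_sym der tmin //.
by rewrite -{1}(expg1 w) mem_porbit.
Qed.

Lemma succ_cycle_min_in_Uset t : t \notin Uset w -> w t \in Uset w.
Proof.
move=> tU; apply/UsetPn => /(_ t); rewrite porbit_sym -{1}(expg1 w) mem_porbit.
by rewrite leNgt cycle_min_lt_succ // => /(_ isT).
Qed.

Lemma lambda_succ_cycle_min t : t \notin Uset w -> lambda w (w t) = t.
Proof.
move=> tU; have ret1 : ((w^-1 ^+ 1)%g (w t) <= w t)%O.
  by rewrite expg1 permK ltW // cycle_min_lt_succ.
have k1 : rho_len (w^-1)%g (w t) = 1.
  by apply/eqP; rewrite eqn_leq rho_len_gt0 rho_len_min.
by rewrite /lambda k1 expg1 permK.
Qed.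

End CycleMinima.

Definition pairs (X : finType) : {set {set X}} := [set A : {set X} | #|A| == 2].

Section LambdaEdges.
Variables (d : Order.disp_t) (T : finOrderType d) (w : {perm T}).
Implicit Types (t x : T) (E : {set {set T}}).

Lemma simple_graphE E : simple_graph E = (E \subset pairs T).
Proof.
apply/forall_inP/subsetP => simpleE e eE; first by rewrite inE simpleE.
by have := simpleE e eE; rewrite inE.
Qed.

Lemma set2_lt_inj (a x b y : T) : (a < x)%O -> (b < y)%O ->
  [set a; x] = [set b; y] -> a = b /\ x = y.
Proof.
move=> lt_ax lt_by eq_ax_by.
have a_in : a \in [set b; y] by rewrite -eq_ax_by set21.
have x_in : x \in [set b; y] by rewrite -eq_ax_by set22.
have b_in : b \in [set a; x] by rewrite eq_ax_by set21.
case/set2P: a_in => [eq_ab|eq_ay].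
  split=> //; case/set2P: x_in => // eq_xb.
  by move: lt_ax; rewrite eq_ab eq_xb ltxx.
case/set2P: b_in => eq_b; first by move: lt_by; rewrite eq_b eq_ay ltxx.
by rewrite eq_b in lt_by; move: (lt_trans lt_ax lt_by); rewrite eq_ay ltxx.
Qed.

Definition lambda_edges t : {set {set T}} :=
  [set [set lambda w t; x] | x in rho w t].

Lemma lambda_lt_rho t x : t \in Uset w -> x \in rho w t -> (lambda w t < x)%O.
Proof. by move=> tU xr; rewrite (lt_le_trans (lambda_lt tU)) ?(rho_ge xr). Qed.

Lemma card_lambda_edges t : t \in Uset w -> #|lambda_edges t| = #|rho w t|.
Proof.
move=> tU; apply: card_in_imset => x y xr yr.
by case/set2_lt_inj; rewrite ?lambda_lt_rho.
Qed.

Lemma lambda_edges_sub_pairs t : t \in Uset w -> lambda_edges t \subset pairs T.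
Proof.
move=> tU; apply/subsetP => _ /imsetP[x xr ->].
by rewrite inE cards2 (lt_eqF (lambda_lt_rho tU xr)).
Qed.

Lemma lambda_edges_disjoint : {in Uset w &, forall t1 t2,
  t1 != t2 -> [disjoint lambda_edges t1 & lambda_edges t2]}.
Proof.
move=> t1 t2 t1U t2U ne_t; rewrite -setI_eq0; apply/eqP/setP => e; rewrite !inE.
apply/negP => /andP[/imsetP[x x1 ->] /imsetP[y y2]].
case/set2_lt_inj; rewrite ?lambda_lt_rho // => eq_lambda eq_xy.
rewrite -eq_xy in y2; move/eqP: ne_t; apply.
exact: Uset_lambda_rho_inj t1U t2U x1 y2 eq_lambda.
Qed.

Lemma adj_lambda_rhoE E t : t \in Uset w ->
  [exists x in rho w t, adj E (lambda w t) x] = (E :&: lambda_edges t != set0).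
Proof.
move=> tU; apply/exists_inP/set0Pn => [[x xr /andP[_ xE]]|[e]].
  by exists [set lambda w t; x]; rewrite inE xE; apply/imsetP; exists x.
rewrite inE => /andP[eE /imsetP[x xr ex]]; exists x => //.
by rewrite /adj lt_eqF ?lambda_lt_rho // -ex eE.
Qed.

Lemma sum_card_rho_le : \sum_(t in Uset w) #|rho w t| <= 'C(#|T|, 2).
Proof.
rewrite -card_draws -(eq_bigr _ card_lambda_edges).
exact: sum_card_disjoint_le lambda_edges_sub_pairs lambda_edges_disjoint.
Qed.

Hypothesis der : derangement w.

Lemma inD_hitting E :
  inD E w = [forall t in Uset w, E :&: lambda_edges t != set0].
Proof.
apply/forallP/forall_inP => hitE t.
  by move=> tU; rewrite -adj_lambda_rhoE ?hitE.
have [tU|tU] := boolP (t \in Uset w); first by rewrite adj_lambda_rhoE ?hitE.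
have := hitE _ (succ_cycle_min_in_Uset der tU).
rewrite -adj_lambda_rhoE ?succ_cycle_min_in_Uset // lambda_succ_cycle_min //.
case/exists_inP => x xr adj_tx; apply/exists_inP; exists x; last by rewrite lambda_id.
exact: (subsetP (rho_succ_cycle_min tU)).
Qed.

Lemma freq_hitting : freq w = #|hitting_subsets lambda_edges (Uset w) (pairs T)|.
Proof. by apply: eq_card => E; rewrite !inE simple_graphE inD_hitting. Qed.

Lemma freq_formula :
  freq w = 2 ^ ('C(#|T|, 2) - \sum_(t in Uset w) #|rho w t|)
             * \prod_(t in Uset w) (2 ^ #|rho w t| - 1).
Proof.
rewrite freq_hitting card_hitting_subsets /pairs ?card_draws; last 2 first.
- exact: lambda_edges_sub_pairs.
- exact: lambda_edges_disjoint.
by congr (2 ^ (_ - _) * _); apply: eq_bigr => t tU; rewrite card_lambda_edges.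
Qed.

End LambdaEdges.

Theorem theorem3p5 (d : Order.disp_t) (T : finOrderType d) (w : {perm T}) :
  derangement w ->
  [/\ freq w = (2 ^ ('C(#|T|, 2) - \sum_(t in Uset w) #|rho w t|)
                 * \prod_(t in Uset w) (2 ^ #|rho w t| - 1))%N,
      ((freq w)%:R = (2 ^ 'C(#|T|, 2))%:R
                 * \prod_(t in Uset w) (1 - 1 / (2 ^ #|rho w t|)%:R) :> rat)%R
    & rate w = (\prod_(t in Uset w) (1 - 1 / (2 ^ #|rho w t|)%:R))%R].
Proof.
move=> der; have freqE := freq_formula der.
have freqQ := congr1 (fun k => k%:R : rat) freqE.
rewrite /= natr_exp2_subn_prod ?sum_card_rho_le // in freqQ.
split=> //; rewrite /rate freqQ mulrC mulKf //.
by rewrite pnatr_eq0 expn_eq0.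
Qed.
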